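(* Let $w\in\Sigma^*$ label a path in the NFA $\mathcal{A}$ from a state $A$ to a state $A'$. Then this path is unique: whenever $w=uv$ and $A\xrightarrow{u}B\xrightarrow{v}A'$ and $A\xrightarrow{u}B'\xrightarrow{v}A'$ in $\mathcal{A}$, we have $B=B'$.
   Context: $\Sigma$ is a finite alphabet with involution $a\mapsto\overline a$ (bijection, $\overline{\overline a}=a$), extended to words by $\overline{a_1\cdots a_m}=\overline{a_m}\cdots\overline{a_1}$. $k\ge1$ is a fixed integer, $[k]=\{0,\dots,k\}$. $\mathcal{A}_1$ is a complete DFA with state set $\mathcal{Q}_1$, initial state $q_{01}$, final states $\mathcal{F}_1$; $\mathcal{A}_2$ is a complete DFA with state set $\mathcal{Q}_2$, initial state $q_{02}$, final states $\mathcal{F}_2$; $p\cdot w$ denotes the state reached from $p$ reading $w$. Let $\mathcal{Q}=\{(q_{01}\cdot w,q_{02}\cdot w): w\in\Sigma^*\}$ and for $P=(p_1,p_2)\in\mathcal{Q}$ put $P\cdot a=(p_1\cdot a,p_2\cdot a)$. A quadruple $(p_1,p_2,q_1,q_2)\in\mathcal{Q}_1\times\mathcal{Q}_2\times\mathcal{Q}_1\times\mathcal{Q}_2$ is a bridge if $B(p_1,p_2,q_1,q_2)=\{\beta: p_1\cdot\beta=q_1,\ p_2\cdot\overline\beta=q_2\}\neq\emptyset$. The NFA $\mathcal{A}$ has state set $\{((p_1,p_2),q_1,q_2,\ell): (p_1,p_2)\in\mathcal{Q},\ q_i\in\mathcal{Q}_i,\ \ell\in[k],\ (p_1,p_2,q_1,q_2)\text{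 a bridge}\}$ and, for $a\in\Sigma$, the following $a$-transitions, present whenever both endpoints are states of $\mathcal{A}$: $(P,q_1\cdot\overline a,q_2\cdot\overline a,0)\xrightarrow{a}(P\cdot a,q_1,q_2,0)$ if $q_1\cdot\overline a\notin\mathcal{F}_1$ and $q_2\cdot\overline a\notin\mathcal{F}_2$; $(P,q_1\cdot\overline a,q_2\cdot\overline a,0)\xrightarrow{a}(P\cdot a,q_1,q_2,1)$ if $q_1\cdot\overline a\in\mathcal{F}_1$ or $q_2\cdot\overline a\in\mathcal{F}_2$; $(P,q_1\cdot\overline a,q_2\cdot\overline a,\ell)\xrightarrow{a}(P\cdot a,q_1,q_2,\ell+1)$ for $1\le\ell<k$. Initial states of $\mathcal{A}$ are the states $((q_{01},q_{02}),q_1',q_2',0)$, final states are the states at level $k$. *)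

From mathcomp Require Import all_boot.
Set Implicit Arguments. Unset Strict Implicit. Unset Printing Implicit Defensive.

Section NFA.
Variables (Sigma : finType) (bar : Sigma -> Sigma) (k : nat).
Variables (Q1 : finType) (d1 : Q1 -> Sigma -> Q1) (q01 : Q1) (F1 : {set Q1}).
Variables (Q2 : finType) (d2 : Q2 -> Sigma -> Q2) (q02 : Q2) (F2 : {set Q2}).

Definition wbar (w : seq Sigma) : seq Sigma := rev (map bar w).

Definition run (Q : Type) (d : Q -> Sigma -> Q) (p : Q) (w : seq Sigma) : Q :=
  foldl d p w.

Definition reachable (P : Q1 * Q2) : Prop :=
  exists w : seq Sigma, P = (run d1 q01 w, run d2 q02 w).

Definition bridge (p1 : Q1) (p2 : Q2) (q1 : Q1) (q2 : Q2) : Prop :=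
  exists beta : seq Sigma, run d1 p1 beta = q1 /\ run d2 p2 (wbar beta) = q2.

Definition nstate := ((Q1 * Q2) * Q1 * Q2 * nat)%type.

Definition is_state (S : nstate) : Prop :=
  let: (P, q1, q2, l) := S in
  [/\ reachable P, l <= k & bridge P.1 P.2 q1 q2].

Definition step (a : Sigma) (S S' : nstate) : Prop :=
  [/\ is_state S, is_state S' &
   let: (P, r1, r2, l) := S in
   let: (P', q1, q2, l') := S' in
   [/\ P' = (d1 P.1 a, d2 P.2 a), r1 = d1 q1 (bar a), r2 = d2 q2 (bar a) &
       [\/ [/\ l = 0, l' = 0, r1 \notin F1 & r2 \notin F2],
           [/\ l = 0, l' = 1 & (r1 \in F1) || (r2 \in F2)]
         | [/\ 1 <= l, l < k & l' = l.+1]]]].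

Fixpoint npath (S : nstate) (w : seq Sigma) (S' : nstate) : Prop :=
  if w is a :: w' then exists T, step a S T /\ npath T w' S' else S = S'.

End NFA.

From mathcomp Require Import all_boot.
Set Implicit Arguments.
Unset Strict Implicit.
Unset Printing Implicit Defensive.

(* A state ((p1,p2), q1, q2, l) splits into a forward part (P, l) and a
   backward part (q1, q2).  An a-transition determines the forward part of
   its target from its source, and the backward part of its source from its
   target.  So on a path reading w to A', the backward part of every state is
   fixed by the rest of w, and then, letter by letter from A, each next state
   is fixed by the current one. *)

Section UniquePath.
Variables (Sigma : finType) (bar : Sigma -> Sigma) (k : nat).
Variables (Q1 : finType) (d1 : Q1 -> Sigma -> Q1) (q01 : Q1) (F1 : {set Q1}).
Variables (Q2 : finType) (d2 : Q2 -> Sigma -> Q2) (q02 : Q2) (F2 : {set Q2}).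

Local Notation step := (step bar k d1 q01 F1 d2 q02 F2).
Local Notation npath := (npath bar k d1 q01 F1 d2 q02 F2).

Definition nstate_fwd (S : nstate Q1 Q2) : (Q1 * Q2) * nat :=
  let: (P, _, _, l) := S in (P, l).

Definition nstate_bwd (S : nstate Q1 Q2) : Q1 * Q2 :=
  let: (_, q1, q2, _) := S in (q1, q2).

Lemma nstate_eq S T :
  nstate_fwd S = nstate_fwd T -> nstate_bwd S = nstate_bwd T -> S = T.
Proof.
by case: S => [[[P r1] r2] l]; case: T => [[[P' r1'] r2'] l'] /= [-> ->] [-> ->].
Qed.

Lemma step_fwd_det a S T T' :
  step a S T -> step a S T' -> nstate_fwd T = nstate_fwd T'.
Proof.
case: S => [[[P r1] r2] l]; case: T => [[[P1 q1] q2] l1].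
case: T' => [[[P1' q1'] q2'] l1'] /= [_ _ [-> _ _ lvl]] [_ _ [-> _ _ lvl']].
congr pair.
case: lvl => [[l0 l1_0 n1 n2]|[l0 l1_1 acc]|[ge1 ltk l1_S]];
case: lvl' => [[l0' l1_0' m1 m2]|[l0' l1_1' acc']|[ge1' ltk' l1_S']]; subst => //.
- by move: acc'; rewrite (negbTE n1) (negbTE n2).
- by move: acc; rewrite (negbTE m1) (negbTE m2).
Qed.

Lemma step_bwd_inj a S S' T T' : nstate_bwd T = nstate_bwd T' ->
  step a S T -> step a S' T' -> nstate_bwd S = nstate_bwd S'.
Proof.
case: S => [[[P r1] r2] l]; case: S' => [[[P' r1'] r2'] l'].
case: T => [[[P1 q1] q2] l1]; case: T' => [[[P1' q1'] q2'] l1'] /= [-> ->].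
by case=> _ _ [_ -> -> _] [_ _ [_ -> -> _]].
Qed.

Lemma npath_bwd_inj w S S' T :
  npath S w T -> npath S' w T -> nstate_bwd S = nstate_bwd S'.
Proof.
elim: w S S' => [|a w IHw] S S' /=; first by move=> -> ->.
case=> [X [stepX pathX]] [X' [stepX' pathX']].
exact: step_bwd_inj (IHw _ _ pathX pathX') stepX stepX'.
Qed.

Lemma npath_cat u v S B T : npath S u B -> npath B v T -> npath S (u ++ v) T.
Proof.
elim: u S => [|a u IHu] S /=; first by move=> ->.
by case=> [X [stepX pathX]] pathB; exists X; split; last exact: IHu pathB.
Qed.

Lemma npath_split_uniq u v A A' B B' :
  npath A u B -> npath B v A' -> npath A u B' -> npath B' v A' -> B = B'.
Proof.
elim: u A => [|a u IHu] A /=; first by move=> <- _ <-.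
case=> [X [stepX pathX]] pathB [X' [stepX' pathX']] pathB'.
have eqX : X = X'.
  apply: nstate_eq; first exact: step_fwd_det stepX stepX'.
  exact: npath_bwd_inj (npath_cat pathX pathB) (npath_cat pathX' pathB').
by subst X'; exact: IHu pathX pathB pathX' pathB'.
Qed.

End UniquePath.

Theorem lemma4
  (Sigma : finType) (bar : Sigma -> Sigma) (bar_invol : involutive bar)
  (k : nat) (hk : 1 <= k)
  (Q1 : finType) (d1 : Q1 -> Sigma -> Q1) (q01 : Q1) (F1 : {set Q1})
  (Q2 : finType) (d2 : Q2 -> Sigma -> Q2) (q02 : Q2) (F2 : {set Q2})
  (A A' B B' : nstate Q1 Q2) (u v : seq Sigma) :
  let pth := npath bar k d1 q01 F1 d2 q02 F2 in
  pth A u B -> pth B v A' -> pth A u B' -> pth B' v A' -> B = B'.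
Proof. exact: npath_split_uniq. Qed.
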